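(* Let $m,M,q,Q\ge1$ with $2m+q+1=2M+Q+1=n$. Let $\mathcal{A}=(A_0,\ldots,A_q)$ be a symmetric Clifford system on $\mathbb{R}^{2m}$ and $\mathcal{B}=(B_0,\ldots,B_Q)$ a symmetric Clifford system on $\mathbb{R}^{2M}$, and consider the cubics on $\mathbb{R}^n$ $$\Phi_{\mathcal{A}}(x)=\sum_{i=0}^q z_i\,y^TA_iy,\quad x=(y,z)\in\mathbb{R}^{2m}\oplus\mathbb{R}^{q+1}\cong\mathbb{R}^n,\qquad \Phi_{\mathcal{B}}(X)=\sum_{j=0}^Q Z_j\,Y^TB_jY,\quad X=(Y,Z)\in\mathbb{R}^{2M}\oplus\mathbb{R}^{Q+1}\cong\mathbb{R}^n.$$ If $\Phi_{\mathcal{A}}$ and $\Phi_{\mathcal{B}}$ are congruent, then $q=Q$.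
   Context: A (symmetric) Clifford system on $\mathbb{R}^{2m}$ with $q\ge1$ is a tuple $(A_0,\ldots,A_q)$ of symmetric $2m\times2m$ real matrices with $A_iA_j+A_jA_i=2\delta_{ij}I$ for all $0\le i,j\le q$. Two homogeneous polynomials $f_1,f_2$ on $\mathbb{R}^n$ are congruent if $f_1(x)=c\,f_2(Ux)$ for all $x$, for some orthogonal linear map $U$ of $\mathbb{R}^n$ and some real $c\neq0$. *)

From HB Require Import structures.
From mathcomp Require Import all_boot all_order all_algebra.
From mathcomp Require Import reals.
Set Implicit Arguments. Unset Strict Implicit. Unset Printing Implicit Defensive.
Import Order.TTheory GRing.Theory Num.Theory.
Local Open Scope ring_scope.

Definition clifford_system (R : realType) (m q : nat)
  (A : 'I_q.+1 -> 'M[R]_(2 * m)) : Prop :=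
  (forall i, (A i)^T = A i) /\
  (forall i j, A i *m A j + A j *m A i = ((i == j)%:R *+ 2) *: 1%:M).

(* The cubic Phi_A(y,z) = sum_i z_i y^T A_i y on R^(2m) (+) R^(q+1),
   with vectors written as row vectors x = (y | z). *)
Definition cliff_cubic (R : realType) (m q : nat)
  (A : 'I_q.+1 -> 'M[R]_(2 * m)) (x : 'rV[R]_(2 * m + q.+1)) : R :=
  let y := lsubmx x in let z := rsubmx x in
  \sum_(i < q.+1) z 0 i * (y *m A i *m y^T) 0 0.

Definition orthogonal_mx (R : realType) (n : nat) (U : 'M[R]_n) : Prop :=
  U^T *m U = 1%:M.

(* f1 and f2 congruent: f1(x) = c f2(U x) for an orthogonal U and c <> 0.
   (Row-vector convention: U x is written x *m U^T.) *)
Definition congruent (R : realType) (n : nat) (f1 f2 : 'rV[R]_n -> R) : Prop :=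
  exists (U : 'M[R]_n) (c : R), orthogonal_mx U /\ c != 0 /\
    forall x : 'rV[R]_n, f1 x = c * f2 (x *m U^T).

(* For a cubic f on R^n the third mixed difference of f at (u, v, w) is trilinear;
   for fixed w it is the bilinear form of the Hessian of f at w, and the
   squared Frobenius norm of that Hessian is a quadratic form in w.  If
   f1 = c * (f2 o U) with U orthogonal, the Hessians are conjugate by U up to the
   factor c, so these quadratic forms agree up to c^2 and the change of variables U.
   For Phi_A the relations A_i A_j + A_j A_i = 2 delta_ij give the value
   8 ((q+1) |y|^2 + m |z|^2).  Hence diag((q+1) I_2m, m I_(q+1)) is orthogonally
   similar to c^2 diag((Q+1) I_2M, M I_(Q+1)); comparing eigenvalues and the traces of
   the first two powers forces c^2 = 1 and q = Q. *)

From HB Require Import structures.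
From mathcomp Require Import all_boot all_order all_algebra.
From mathcomp Require Import reals.
From mathcomp Require Import ring lra.
Import Order.TTheory GRing.Theory Num.Theory.
Local Open Scope ring_scope.
Set Implicit Arguments. Unset Strict Implicit. Unset Printing Implicit Defensive.

Section OneByOne.
Variable R : pzRingType.

Lemma mx11D (X Y : 'M[R]_1) : (X + Y) 0 0 = X 0 0 + Y 0 0.
Proof. by rewrite mxE. Qed.

Lemma mx11Z a (X : 'M[R]_1) : (a *: X) 0 0 = a * X 0 0.
Proof. by rewrite mxE. Qed.

Lemma mx11_tr (X : 'M[R]_1) : X^T 0 0 = X 0 0.
Proof. by rewrite mxE. Qed.

End OneByOne.

Section SquaredFrobeniusNorm.
Variable R : comUnitRingType.

Definition sqfrob r s (M : 'M[R]_(r, s)) : R := \sum_a \sum_b M a b ^+ 2.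

Lemma sqfrobE r s (M : 'M[R]_(r, s)) : sqfrob M = \tr (M *m M^T).
Proof.
rewrite /sqfrob /mxtrace; apply: eq_bigr => a _; rewrite mxE.
by apply: eq_bigr => b _; rewrite mxE expr2.
Qed.

Lemma sqfrob_tr r s (M : 'M[R]_(r, s)) : sqfrob M^T = sqfrob M.
Proof. by rewrite /sqfrob exchange_big; do 2!apply: eq_bigr => ? _; rewrite mxE. Qed.

Lemma sqfrobZ r s a (M : 'M[R]_(r, s)) : sqfrob (a *: M) = a ^+ 2 * sqfrob M.
Proof.
rewrite /sqfrob mulr_sumr; apply: eq_bigr => i _; rewrite mulr_sumr.
by apply: eq_bigr => j _; rewrite mxE exprMn.
Qed.

Lemma sqfrob0 r s : sqfrob (0 : 'M[R]_(r, s)) = 0.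
Proof. by rewrite -(scale0r 0) sqfrobZ expr0n mul0r. Qed.

Lemma sqfrob_block r1 r2 s1 s2 (Aul : 'M[R]_(r1, s1)) (Aur : 'M[R]_(r1, s2))
    (Adl : 'M[R]_(r2, s1)) (Adr : 'M[R]_(r2, s2)) :
  sqfrob (block_mx Aul Aur Adl Adr) =
  sqfrob Aul + sqfrob Aur + sqfrob Adl + sqfrob Adr.
Proof.
rewrite /sqfrob big_split_ord /=.
under eq_bigr do rewrite big_split_ord /=.
under [X in _ + X]eq_bigr do rewrite big_split_ord /=.
rewrite !big_split /= !addrA.
by congr (_ + _ + _ + _); do 2!apply: eq_bigr => ? _;
  rewrite ?block_mxEul ?block_mxEur ?block_mxEdl ?block_mxEdr.
Qed.

End SquaredFrobeniusNorm.

Section OrthogonalConjugation.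
Variables (R : comUnitRingType) (n : nat) (U : 'M[R]_n).
Hypothesis U_orth : U^T *m U = 1%:M.

Lemma orth_mulmx_tr : U *m U^T = 1%:M.
Proof. exact: mulmx1C. Qed.

Lemma orth_conjM X Y : U^T *m X *m U *m (U^T *m Y *m U) = U^T *m (X *m Y) *m U.
Proof. by rewrite !mulmxA -(mulmxA _ U) orth_mulmx_tr mulmx1. Qed.

Lemma orth_conjB_scalar X x : U^T *m X *m U - x%:M = U^T *m (X - x%:M) *m U.
Proof. by rewrite mulmxBr mulmxBl mul_mx_scalar -scalemxAl U_orth scalemx1. Qed.

Lemma orth_conj_eq0 X : U^T *m X *m U = 0 -> X = 0.
Proof.
move=> X0; have -> : X = U *m (U^T *m X *m U) *m U^T.
  by rewrite !mulmxA orth_mulmx_tr mul1mx -mulmxA orth_mulmx_tr mulmx1.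
by rewrite X0 mulmx0 mul0mx.
Qed.

Lemma mxtrace_orth_conj X : \tr (U^T *m X *m U) = \tr X.
Proof. by rewrite mxtrace_mulC mulmxA orth_mulmx_tr mul1mx. Qed.

Lemma sqfrob_orth_conj H : sqfrob (U^T *m H *m U) = sqfrob H.
Proof.
rewrite !sqfrobE !trmx_mul trmxK -!mulmxA [U *m (U^T *m _)]mulmxA orth_mulmx_tr.
by rewrite mul1mx mxtrace_mulC -!mulmxA orth_mulmx_tr mulmx1.
Qed.

End OrthogonalConjugation.

Section Polarization.
Variable R : comPzRingType.

Definition polar3 p (f : 'rV[R]_p -> R) (u v w : 'rV[R]_p) : R :=
  f (u + v + w) - f (u + v) - f (u + w) - f (v + w) + f u + f v + f w - f 0.

Definition is_hessian p (f : 'rV[R]_p -> R) (w : 'rV[R]_p) (H : 'M[R]_p) :=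
  forall u v, polar3 f u v w = (u *m H *m v^T) 0 0.

Lemma bilin_delta n (H : 'M[R]_n) a b :
  ((delta_mx 0 a : 'rV[R]_n) *m H *m (delta_mx 0 b : 'rV[R]_n)^T) 0 0 = H a b.
Proof. by rewrite -rowE trmx_delta -colE !mxE. Qed.

Lemma is_hessian_unique p (f : 'rV[R]_p -> R) w H1 H2 :
  is_hessian f w H1 -> is_hessian f w H2 -> H1 = H2.
Proof.
move=> hH1 hH2; apply/matrixP => a b.
by rewrite -bilin_delta -hH1 hH2 bilin_delta.
Qed.

Lemma polar3_trilinear p (T : 'rV[R]_p -> 'rV[R]_p -> 'rV[R]_p -> R) :
  (forall x x' y z, T (x + x') y z = T x y z + T x' y z) ->
  (forall x y y' z, T x (y + y') z = T x y z + T x y' z) ->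
  (forall x y z z', T x y (z + z') = T x y z + T x y z') ->
  forall u v w, polar3 (fun x => T x x x) u v w =
    T u v w + T u w v + T v u w + T v w u + T w u v + T w v u.
Proof.
move=> TDl TDm TDr u v w.
have T0 y z : T 0 y z = 0 by apply: (addrI (T 0 y z)); rewrite -TDl !addr0.
rewrite /polar3 !(TDl, TDm, TDr) !T0; ring.
Qed.

Lemma is_hessian_comp p p' (f1 : 'rV[R]_p -> R) (f2 : 'rV[R]_p' -> R)
    (V : 'M[R]_(p, p')) c w H :
  (forall x, f1 x = c * f2 (x *m V)) -> is_hessian f2 (w *m V) H ->
  is_hessian f1 w (c *: (V *m H *m V^T)).
Proof.
move=> f12 hH u v.
have -> : polar3 f1 u v w = c * polar3 f2 (u *m V) (v *m V) (w *m V).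
  by rewrite /polar3 !f12 !mulmxDl mul0mx; ring.
by rewrite hH -scalemxAr -scalemxAl mx11Z trmx_mul !mulmxA.
Qed.

End Polarization.

Lemma sqfrob_hessian_congr (R : comUnitRingType) n (f1 f2 : 'rV[R]_n -> R)
    (U : 'M[R]_n) c w H1 H2 :
  U^T *m U = 1%:M -> (forall x, f1 x = c * f2 (x *m U^T)) ->
  is_hessian f1 w H1 -> is_hessian f2 (w *m U^T) H2 ->
  sqfrob H1 = c ^+ 2 * sqfrob H2.
Proof.
move=> U_orth f12 hH1 hH2.
rewrite (is_hessian_unique hH1 (is_hessian_comp f12 hH2)) trmxK sqfrobZ.
by rewrite sqfrob_orth_conj.
Qed.

Section TwoValuedDiagonal.
Variable R : comPzRingType.

Definition diag2 p s (a b : R) : 'M[R]_p :=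
  diag_mx (\row_(i < p) if (i < s)%N then a else b).
Arguments diag2 : clear implicits.

Lemma diag2E p s a b (i : 'I_p) : diag2 p s a b i i = if (i < s)%N then a else b.
Proof. by rewrite !mxE eqxx mulr1n. Qed.

Lemma diag2Z p s k a b : k *: diag2 p s a b = diag2 p s (k * a) (k * b).
Proof. by apply/matrixP => i j; rewrite !mxE mulrnAr; case: ifP. Qed.

Lemma diag2_sub_scalar p s a b x :
  diag2 p s a b - x%:M = diag2 p s (a - x) (b - x).
Proof.
by apply/matrixP => i j; rewrite !mxE; case: eqVneq => _; case: ifP; rewrite ?subr0.
Qed.

Lemma diag2M p s a b a' b' :
  diag2 p s a b *m diag2 p s a' b' = diag2 p s (a * a') (b * b').
Proof.
by rewrite mulmx_diag; congr diag_mx; apply/rowP => i; rewrite !mxE; case: ifP.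
Qed.

Lemma mxtrace_diag2 p s t a b : p = (s + t)%N ->
  \tr (diag2 p s a b) = s%:R * a + t%:R * b.
Proof.
move=> ->; rewrite mxtrace_diag big_split_ord /=.
under eq_bigr => i _ do rewrite mxE (ltn_ord i).
under [X in _ + X]eq_bigr => i _ do rewrite mxE ltnNge (leq_addr i s).
by rewrite !sumr_const !card_ord !mulr_natl.
Qed.

Lemma diag2_quad s t a b (w : 'rV[R]_(s + t)) :
  (w *m diag2 (s + t) s a b *m w^T) 0 0 =
  a * \sum_i lsubmx w 0 i ^+ 2 + b * \sum_i rsubmx w 0 i ^+ 2.
Proof.
rewrite mul_mx_diag mxE big_split_ord !mulr_sumr /=.
congr (_ + _); apply: eq_bigr => i _; rewrite !mxE.
  by rewrite (ltn_ord i) expr2; ring.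
by rewrite ifN ?expr2 -?leqNgt ?leq_addr //; ring.
Qed.

Lemma diag2_annih p s a b : (diag2 p s a b - a%:M) *m (diag2 p s a b - b%:M) = 0.
Proof.
rewrite !diag2_sub_scalar diag2M !subrr mul0r mulr0.
by apply/matrixP => i j; rewrite !mxE; case: ifP; rewrite mul0rn.
Qed.

End TwoValuedDiagonal.

Lemma sym_quad_form_inj (R : realFieldType) n (S1 S2 : 'M[R]_n) :
  S1^T = S1 -> S2^T = S2 ->
  (forall w : 'rV_n, (w *m S1 *m w^T) 0 0 = (w *m S2 *m w^T) 0 0) -> S1 = S2.
Proof.
move=> S1sym S2sym hS; apply/matrixP => i j.
pose e k : 'rV[R]_n := delta_mx 0 k.
have hii := hS (e i); have hjj := hS (e j); have := hS (e i + e j).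
rewrite raddfD /= !mulmxDl !mulmxDr !mx11D !bilin_delta.
rewrite !bilin_delta in hii hjj.
have e1 : S1 j i = S1 i j by rewrite -{1}S1sym mxE.
have e2 : S2 j i = S2 i j by rewrite -{1}S2sym mxE.
lra.
Qed.

Section CliffordCubic.
Variables (R : realType) (m q : nat) (A : 'I_q.+1 -> 'M[R]_(2 * m)).
Hypothesis A_sym : forall i, (A i)^T = A i.
Hypothesis A_anticomm :
  forall i j, A i *m A j + A j *m A i = ((i == j)%:R *+ 2) *: 1%:M.
Local Notation N := (2 * m + q.+1)%N.

Lemma cliff_sq i : A i *m A i = 1%:M.
Proof.
have := A_anticomm i i; rewrite eqxx; set X := A i *m A i => hX; clearbody X.
apply/matrixP => r s; have := congr1 (fun M : 'M_(2 * m) => M r s) hX.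
by rewrite !mxE mulr2n mulr1n; lra.
Qed.

Lemma mxtrace_cliff i j : \tr (A i *m A j) = (i == j)%:R * (2 * m)%:R.
Proof.
have := congr1 mxtrace (A_anticomm i j).
rewrite mxtraceD mxtraceZ mxtrace1 (mxtrace_mulC (A j)) !mulr2n.
by lra.
Qed.

Definition cliff_comb (z : 'rV[R]_q.+1) : 'M[R]_(2 * m) := \sum_i z 0 i *: A i.

Definition cliff_cols (y : 'rV[R]_(2 * m)) : 'M[R]_(2 * m, q.+1) :=
  \matrix_(r, i) (A i *m y^T) r 0.

Definition cliff_trilin (x1 x2 x3 : 'rV[R]_N) : R :=
  \sum_i rsubmx x1 0 i * (lsubmx x2 *m A i *m (lsubmx x3)^T) 0 0.

Definition cliff_hessian (w : 'rV[R]_N) : 'M[R]_N :=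
  2 *: block_mx (cliff_comb (rsubmx w)) (cliff_cols (lsubmx w))
                (cliff_cols (lsubmx w))^T 0.

Lemma cliff_comb_sym z : (cliff_comb z)^T = cliff_comb z.
Proof.
by rewrite /cliff_comb linear_sum; apply: eq_bigr => i _; rewrite linearZ /= A_sym.
Qed.

Lemma cliff_combD z z' : cliff_comb (z + z') = cliff_comb z + cliff_comb z'.
Proof.
by rewrite /cliff_comb -big_split; apply: eq_bigr => i _; rewrite mxE scalerDl.
Qed.

Lemma cliff_trilinE x1 x2 x3 :
  cliff_trilin x1 x2 x3 = (lsubmx x2 *m cliff_comb (rsubmx x1) *m (lsubmx x3)^T) 0 0.
Proof.
rewrite /cliff_comb mulmx_sumr mulmx_suml summxE; apply: eq_bigr => i _.
by rewrite -scalemxAr -scalemxAl mx11Z.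
Qed.

Lemma cliff_trilin_sym x1 x2 x3 : cliff_trilin x1 x2 x3 = cliff_trilin x1 x3 x2.
Proof. by rewrite !cliff_trilinE -mx11_tr !trmx_mul trmxK cliff_comb_sym mulmxA. Qed.

Lemma cliff_trilinDl x x' y z :
  cliff_trilin (x + x') y z = cliff_trilin x y z + cliff_trilin x' y z.
Proof. by rewrite !cliff_trilinE linearD cliff_combD mulmxDr mulmxDl mx11D. Qed.

Lemma cliff_trilinDm x y y' z :
  cliff_trilin x (y + y') z = cliff_trilin x y z + cliff_trilin x y' z.
Proof. by rewrite !cliff_trilinE linearD !mulmxDl mx11D. Qed.

Lemma cliff_trilinDr x y z z' :
  cliff_trilin x y (z + z') = cliff_trilin x y z + cliff_trilin x y z'.
Proof. by rewrite !cliff_trilinE !linearD /= mx11D. Qed.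

Lemma cliff_cols_bilin (y' y : 'rV[R]_(2 * m)) z :
  (y' *m cliff_cols y *m z^T) 0 0 = (y' *m cliff_comb z *m y^T) 0 0.
Proof.
rewrite /cliff_comb mulmx_sumr mulmx_suml summxE mxE; apply: eq_bigr => i _.
rewrite -scalemxAr -scalemxAl mx11Z [_^T i 0]mxE mulrC; congr (_ * _).
by rewrite -mulmxA mxE [RHS]mxE; apply: eq_bigr => r _; rewrite mxE.
Qed.

Lemma cliff_hessianP w : is_hessian (cliff_cubic A) w (cliff_hessian w).
Proof.
move=> u v; rewrite (polar3_trilinear cliff_trilinDl cliff_trilinDm cliff_trilinDr).
rewrite /cliff_hessian -[in RHS](hsubmxK u) -[in RHS](hsubmxK v) tr_row_mx.
rewrite -scalemxAr -scalemxAl mx11Z mul_row_block mul_row_col mulmx0 addr0.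
rewrite !mulmxDl !mx11D cliff_cols_bilin -[(rsubmx u *m _ *m _) 0 0]mx11_tr.
rewrite !trmx_mul !trmxK mulmxA cliff_cols_bilin -!cliff_trilinE.
rewrite [cliff_trilin u w v]cliff_trilin_sym [cliff_trilin v w u]cliff_trilin_sym.
by rewrite [cliff_trilin w v u]cliff_trilin_sym; ring.
Qed.

Lemma sqfrob_cliff_comb z : sqfrob (cliff_comb z) = (2 * m)%:R * \sum_i z 0 i ^+ 2.
Proof.
rewrite sqfrobE cliff_comb_sym /cliff_comb mulmx_suml raddf_sum mulr_sumr.
apply: eq_bigr => i _; rewrite mulmx_sumr raddf_sum (bigD1 i) //= big1 => [|j ji].
  by rewrite -scalemxAr -scalemxAl !mxtraceZ mxtrace_cliff eqxx mulr1n addr0; ring.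
by rewrite -scalemxAr -scalemxAl !mxtraceZ mxtrace_cliff eq_sym (negPf ji) !mul0r !mulr0.
Qed.

Lemma sqfrob_cliff_cols y : sqfrob (cliff_cols y) = q.+1%:R * \sum_r y 0 r ^+ 2.
Proof.
rewrite /sqfrob exchange_big /=.
rewrite (eq_bigr (fun _ => \sum_r y 0 r ^+ 2)) ?sumr_const ?card_ord ?mulr_natl //.
move=> i _; under eq_bigr do rewrite mxE.
transitivity (((A i *m y^T)^T *m (A i *m y^T)) 0 0).
  by rewrite mxE; apply: eq_bigr => r _; rewrite [_^T 0 r]mxE expr2.
rewrite trmx_mul trmxK A_sym -mulmxA (mulmxA (A i)) cliff_sq mul1mx mxE.
by apply: eq_bigr => r _; rewrite mxE expr2.
Qed.

Lemma sqfrob_cliff_hessian w :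
  sqfrob (cliff_hessian w) = 8 * (w *m diag2 N (2 * m) q.+1%:R m%:R *m w^T) 0 0.
Proof.
rewrite diag2_quad sqfrobZ sqfrob_block sqfrob_tr sqfrob0 sqfrob_cliff_comb.
by rewrite sqfrob_cliff_cols natrM; ring.
Qed.

Lemma cliff_cubic_cast_hessian p (e : p = N) (w : 'rV[R]_p) :
  exists2 H, is_hessian (fun x => cliff_cubic A (castmx (erefl 1%N, e) x)) w H &
    sqfrob H = 8 * (w *m diag2 p (2 * m) q.+1%:R m%:R *m w^T) 0 0.
Proof.
subst p.
by exists (cliff_hessian w); [exact: cliff_hessianP | exact: sqfrob_cliff_hessian].
Qed.

End CliffordCubic.

(* The eigenvalues b (multiplicity 2a), a (multiplicity b) against k b' (multiplicity
   2a'), k a' (multiplicity b'): the latter lie in {a, b}, and the traces of the first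
   two powers agree. *)
Lemma two_value_spectrum_eq (R : realFieldType) (a b a' b' k : R) : a * b != 0 ->
  (k * b' - b) * (k * b' - a) = 0 -> (k * a' - b) * (k * a' - a) = 0 ->
  2 * a * b + b * a = 2 * a' * (k * b') + b' * (k * a') ->
  2 * a * (b * b) + b * (a * a) =
    2 * a' * (k * b' * (k * b')) + b' * (k * a' * (k * a')) ->
  b = b'.
Proof.
move=> ab0 hb' ha' T1 T2.
have kab : a * b = k * (a' * b') by lra.
have key : 2 * b + a = 2 * (k * b') + k * a'.
  by apply: (mulfI ab0); rewrite [in RHS]kab; lra.
have [kb' ka'] : k * b' = b /\ k * a' = a.
  move/eqP: hb'; rewrite mulf_eq0 !subr_eq0 => /orP[]/eqP hb';
  move/eqP: ha'; rewrite mulf_eq0 !subr_eq0 => /orP[]/eqP ha'; lra.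
have k1 : k = 1.
  apply: (mulIf (x := k * (a' * b'))); first by rewrite -kab.
  by rewrite mul1r -[in RHS]kab -ka' -kb'; ring.
by rewrite -kb' k1 mul1r.
Qed.

Lemma diag2_orth_similar (R : realFieldType) n m q M Q k (U : 'M[R]_n) :
  (0 < m)%N -> (0 < M)%N -> n = (2 * m + q.+1)%N -> n = (2 * M + Q.+1)%N ->
  U^T *m U = 1%:M ->
  diag2 n (2 * m) q.+1%:R m%:R = k *: (U^T *m diag2 n (2 * M) Q.+1%:R M%:R *m U) ->
  q = Q.
Proof.
move=> m0 M0 hA hB U_orth.
rewrite scalemxAl scalemxAr diag2Z.
set D := diag2 _ _ _ _; set E := diag2 _ _ _ _ => DE.
have E_annih : (E - q.+1%:R%:M) *m (E - m%:R%:M) = 0.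
  apply: (orth_conj_eq0 U_orth).
  by rewrite -orth_conjM // -!(orth_conjB_scalar U_orth) -DE diag2_annih.
have trD : \tr D = \tr E by rewrite DE mxtrace_orth_conj.
have trD2 : \tr (D *m D) = \tr (E *m E) by rewrite DE orth_conjM // mxtrace_orth_conj.
have i0 : (0 < n)%N by rewrite hB addnS.
have iM : (2 * M < n)%N by rewrite hB addnS ltnS leq_addr.
rewrite /E !diag2_sub_scalar diag2M in E_annih.
have E00 := congr1 (fun X : 'M_n => X (Ordinal i0) (Ordinal i0)) E_annih.
have EMM := congr1 (fun X : 'M_n => X (Ordinal iM) (Ordinal iM)) E_annih.
rewrite /= diag2E mxE /= muln_gt0 M0 in E00; rewrite /= diag2E mxE /= ltnn in EMM.
rewrite /D /E !diag2M !(mxtrace_diag2 _ _ hA) !(mxtrace_diag2 _ _ hB) !natrM in trD trD2.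
have : q.+1%:R = Q.+1%:R :> R.
  by apply: two_value_spectrum_eq E00 EMM trD trD2; rewrite mulf_neq0 // pnatr_eq0 -lt0n.
by move/eqP; rewrite eqr_nat => /eqP [].
Qed.

Theorem corollary2 (R : realType) (n m M q Q : nat)
  (hm : (1 <= m)%N) (hM : (1 <= M)%N) (hq : (1 <= q)%N) (hQ : (1 <= Q)%N)
  (hA : n = (2 * m + q.+1)%N) (hB : n = (2 * M + Q.+1)%N)
  (A : 'I_q.+1 -> 'M[R]_(2 * m)) (B : 'I_Q.+1 -> 'M[R]_(2 * M)) :
  clifford_system A -> clifford_system B ->
  congruent (fun x : 'rV[R]_n => cliff_cubic A (castmx (erefl 1%N, hA) x))
            (fun x : 'rV[R]_n => cliff_cubic B (castmx (erefl 1%N, hB) x)) ->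
  q = Q.
Proof.
move=> [A_sym A_ac] [B_sym B_ac] [U [c [U_orth [_ fAB]]]].
pose DA := diag2 n (2 * m) q.+1%:R (m%:R : R).
pose DB := diag2 n (2 * M) Q.+1%:R (M%:R : R).
have quadE (w : 'rV_n) :
    (w *m DA *m w^T) 0 0 = (w *m (c ^+ 2 *: (U^T *m DB *m U)) *m w^T) 0 0.
  have [HA hHA normA] := cliff_cubic_cast_hessian A_sym A_ac hA w.
  have [HB hHB normB] := cliff_cubic_cast_hessian B_sym B_ac hB (w *m U^T).
  have := sqfrob_hessian_congr U_orth fAB hHA hHB.
  rewrite normA normB -scalemxAr -scalemxAl mx11Z trmx_mul trmxK !mulmxA.
  by lra.
apply: (diag2_orth_similar hm hM hA hB U_orth).
apply: sym_quad_form_inj quadE; first exact: tr_diag_mx.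
by rewrite linearZ /= !trmx_mul trmxK tr_diag_mx mulmxA.
Qed.
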